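(* Let $G$ be a finite group and $G^- = \{ g \in G : \langle g \rangle \text{ is not a maximal cyclic subgroup of } G\}$. If $G^-$ is a subgroup of $G$, then every element of $G$ has prime power order.
   Context: A cyclic subgroup $C$ of $G$ is maximal cyclic if there is no cyclic subgroup $D$ of $G$ with $C < D$. *)

From mathcomp Require Import all_boot all_fingroup all_solvable.
Set Implicit Arguments. Unset Strict Implicit. Unset Printing Implicit Defensive.
Local Open Scope group_scope.

Definition max_cyclic (gT : finGroupType) (G C : {set gT}) : bool :=
  [&& C \subset G, cyclic C &
      ~~ [exists D : {group gT}, [&& D \subset G, cyclic D & C \proper D]]].

Definition Gminus (gT : finGroupType) (G : {set gT}) : {set gT} :=
  [set g in G | ~~ max_cyclic G <[g]>].

From mathcomp Require Import all_boot all_fingroup all_solvable.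
Local Open Scope group_scope.

(* Every g in G lies in some maximal cyclic subgroup <[h]>, and #[g] divides
   #[h], so it suffices to show that generators of maximal cyclic subgroups
   have prime power order.  If #[h] is not a prime power, then h is the product
   of its p-part and its p'-part, each generating a proper subgroup of <[h]>.
   Both factors thus lie in G^-, hence so does h when G^- is a subgroup; but
   <[h]> is maximal cyclic, i.e. h is not in G^-. *)

Section MaximalCyclic.

Set Implicit Arguments.
Unset Strict Implicit.

Definition prime_power (n : nat) : Prop := exists p k : nat, prime p /\ n = (p ^ k)%N.

Lemma prime_power_dvd d n : (d %| n)%N -> prime_power n -> prime_power d.
Proof.
move=> dvd_dn [p [k [p_pr n_eq]]]; rewrite n_eq in dvd_dn.
by case/(dvdn_pfactor _ _ p_pr): dvd_dn => j _ ->; exists p, j.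
Qed.

Variable gT : finGroupType.

Lemma prime_power_or_constt_order_lt (x : gT) p :
  prime p -> (p %| #[x])%N ->
  prime_power #[x] \/ (#[x.`_p] < #[x] /\ #[x.`_p^'] < #[x])%N.
Proof.
move=> p_pr p_dvd; rewrite !order_constt.
have [xp_eq | xp_neq] := eqVneq (#[x]`_p)%N #[x].
  by left; exists p, (logn p #[x]); rewrite -p_part xp_eq.
right; split; first by rewrite ltn_neqAle xp_neq dvdn_leq ?dvdn_part.
have xp_gt1 : (1 < #[x]`_p)%N by rewrite p_part_gt1 mem_primes p_pr order_gt0.
by rewrite -{2}(partnC p (order_gt0 x)) ltn_Pmull ?part_gt0.
Qed.

Variable G : {group gT}.

Lemma max_cyclic_exists g :
  g \in G -> exists2 h, max_cyclic G <[h]> & g \in <[h]>.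
Proof.
move=> gG; pose P := [pred D : {group gT} | (D \subset G) && cyclic D].
have P_g : P <[g]>%G by rewrite /= cycle_subG gG cycle_cyclic.
have [H /maxgroupP[/andP[HG /cyclicP[h defH]] maxH] gH] := maxgroup_exists P_g.
exists h; last by rewrite -defH -cycle_subG.
rewrite /max_cyclic -defH HG {1}defH cycle_cyclic /=.
apply/existsP=> -[D /and3P[DG cD /andP[HD DH]]].
have defD : D :=: H by apply: maxH; rewrite //= DG.
by rewrite defD subxx in DH.
Qed.

Lemma Gminus_cycle_order_lt h x :
  h \in G -> x \in <[h]> -> (#[x] < #[h])%N -> x \in Gminus G.
Proof.
move=> hG xh lt_xh; have sxh : <[x]> \subset <[h]> by rewrite cycle_subG.
have xG : x \in G by rewrite -cycle_subG (subset_trans sxh) ?cycle_subG.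
rewrite inE xG /max_cyclic cycle_subG xG cycle_cyclic negbK.
apply/existsP; exists <[h]>%G.
by rewrite cycle_subG hG cycle_cyclic properEcard sxh.
Qed.

Lemma max_cyclic_prime_power h :
  group_set (Gminus G) -> max_cyclic G <[h]> -> prime_power #[h].
Proof.
move=> Gminus_gr max_h; pose M := Group Gminus_gr.
have hG : h \in G by rewrite -cycle_subG; case/andP: max_h.
have [h_le1 | h_gt1] := leqP #[h] 1.
  suff -> : #[h] = 1%N by exists 2%N, 0%N.
  by apply/eqP; rewrite eqn_leq h_le1 order_gt0.
have p_pr := pdiv_prime h_gt1.
case: (prime_power_or_constt_order_lt p_pr (pdiv_dvd _)) => // -[lt_p lt_p'].
have hM : h \in M.
  by rewrite -(consttC (pdiv #[h]) h) groupM //= (Gminus_cycle_order_lt hG)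
    ?cycle_constt.
by move: hM; rewrite inE max_h andbF.
Qed.

End MaximalCyclic.

Theorem lemma3p3 (gT : finGroupType) (G : {group gT}) :
  group_set (Gminus G) ->
  forall g, g \in G -> exists p k : nat, prime p /\ #[g] = (p ^ k)%N.
Proof.
move=> Gminus_gr g gG.
have [h max_h gh] := max_cyclic_exists gG.
apply: prime_power_dvd (max_cyclic_prime_power Gminus_gr max_h).
by apply: cardSg; rewrite cycle_subG.
Qed.
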